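(* Let $(\mathfrak{g},[\cdot,\ldots,\cdot],\varepsilon,\alpha)$ be an $n$-Hom-Lie color algebra. Then $\mathfrak{g}$ admits a strict product structure if and only if $\mathfrak{g}$ admits a decomposition $\mathfrak{g}=\mathfrak{g}_+\oplus\mathfrak{g}_-$ into two nonzero $\Gamma$-graded subalgebras $\mathfrak{g}_+,\mathfrak{g}_-$ such that for every $1\le i\le n-1$, $[a_1,\ldots,a_i,b_{i+1},\ldots,b_n]=0$ for all $a_1,\ldots,a_i\in\mathfrak{g}_+$ and $b_{i+1},\ldots,b_n\in\mathfrak{g}_-$.
   Context: $\mathbb{K}$ is a field of characteristic zero and $\Gamma$ an abelian group. A bicharacter is a map $\varepsilon:\Gamma\times\Gamma\to\mathbb{K}\setminus\{0\}$ with $\varepsilon(a,b)\varepsilon(b,a)=1$, $\varepsilon(a,b+c)=\varepsilon(a,b)\varepsilon(a,c)$, $\varepsilon(a+b,c)=\varepsilon(a,c)\varepsilon(b,c)$. For homogeneous $x,y$, $\varepsilon(x,y)=\varepsilon(|x|,|y|)$ and $\varepsilon(x,y_1+\dots+y_k)=\varepsilon(|x|,|y_1|+\dots+|y_k|)$ ($=1$ for an empty sum). An $n$-Hom-Lie color algebra $(\mathfrak{g},[\cdot,\ldots,\cdot],\varepsilon,\alpha)$ is a $\Gamma$-graded vector space with an $n$-linear bracket of degree zero, a bicharacter $\varepsilon$ and a degree-zero linear map $\alpha$ such that for homogeneous elements: (i) $[x_1,\ldots,x_i,x_{i+1},\ldots,x_n]=-\varepsilon(x_i,x_{i+1})[x_1,\ldots,x_{i+1},x_i,\ldots,x_n]$;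 (ii) $[\alpha(x_1),\ldots,\alpha(x_{n-1}),[y_1,\ldots,y_n]]=\sum_{i=1}^n\varepsilon(x_1+\dots+x_{n-1},y_1+\dots+y_{i-1})[\alpha(y_1),\ldots,\alpha(y_{i-1}),[x_1,\ldots,x_{n-1},y_i],\alpha(y_{i+1}),\ldots,\alpha(y_n)]$. A $\Gamma$-graded subalgebra is a graded subspace $\mathfrak{h}=\bigoplus_\gamma(\mathfrak{h}\cap\mathfrak{g}_\gamma)$ with $\alpha(\mathfrak{h})\subseteq\mathfrak{h}$ and $[\mathfrak{h},\ldots,\mathfrak{h}]\subseteq\mathfrak{h}$. An almost product structure is a degree-zero linear map $\mathcal{P}:\mathfrak{g}\to\mathfrak{g}$ with $\mathcal{P}\neq\pm\mathrm{id}$ and $\mathcal{P}^2=\mathrm{id}$. A degree-zero linear map $\Theta$ is in the centroid if $\Theta\alpha=\alpha\Theta$ and $\Theta([x_1,x_2,\ldots,x_n])=[\Theta x_1,x_2,\ldots,x_n]$ for all $x_i$. A strict product structure is an almost product structure lying in the centroid. *)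

From HB Require Import structures.
From mathcomp Require Import all_boot all_order all_algebra.
Set Implicit Arguments. Unset Strict Implicit. Unset Printing Implicit Defensive.
Import GRing.Theory.
Local Open Scope ring_scope.

(* Conventions: the n-ary bracket is a function br : ('I_n -> V) -> V,
   argument j : 'I_n is the (j+1)-th slot (0-based indices). *)

Section Defs.
Variables (K : fieldType) (Gam : zmodType) (V : lmodType K).

Definition subspace (S : V -> Prop) : Prop :=
  S 0 /\ (forall x y, S x -> S y -> S (x + y)) /\
  (forall (k : K) x, S x -> S (k *: x)).

Definition grading (G : Gam -> V -> Prop) : Prop :=
  (forall g, subspace (G g)) /\
  (forall x, exists (s : seq Gam) (c : Gam -> V),
      uniq s /\ (forall g, G g (c g)) /\ x = \sum_(g <- s) c g) /\
  (forall (s : seq Gam) (c : Gam -> V), uniq s -> (forall g, G g (c g)) ->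
      \sum_(g <- s) c g = 0 -> forall g, g \in s -> c g = 0).

Definition bicharacter (eps : Gam -> Gam -> K) : Prop :=
  (forall a b, eps a b != 0) /\
  (forall a b, eps a b * eps b a = 1) /\
  (forall a b c, eps a (b + c) = eps a b * eps a c) /\
  (forall a b c, eps (a + b) c = eps a c * eps b c).

Definition klinear (f : V -> V) : Prop :=
  forall (k : K) x y, f (k *: x + y) = k *: f x + f y.

Definition deg0 (G : Gam -> V -> Prop) (f : V -> V) : Prop :=
  klinear f /\ (forall g x, G g x -> G g (f x)).

Definition upd n (f : 'I_n -> V) (i : 'I_n) (v : V) : 'I_n -> V :=
  fun j => if j == i then v else f j.

Definition swapf n (f : 'I_n -> V) (i j : 'I_n) : 'I_n -> V :=
  fun k => if k == i then f j else if k == j then f i else f k.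

Definition nHomLieColor n (G : Gam -> V -> Prop) (br : ('I_n -> V) -> V)
    (eps : Gam -> Gam -> K) (alpha : V -> V) : Prop :=
  grading G /\ bicharacter eps /\ deg0 G alpha /\
  (forall (f : 'I_n -> V) (i : 'I_n), klinear (fun v => br (upd f i v))) /\
  (forall (f : 'I_n -> V) (d : 'I_n -> Gam),
      (forall j, G (d j) (f j)) -> G (\sum_(j < n) d j) (br f)) /\
  (forall (f : 'I_n -> V) (d : 'I_n -> Gam) (i j : 'I_n),
      (forall k, G (d k) (f k)) -> nat_of_ord j = (nat_of_ord i).+1 ->
      br f = - (eps (d i) (d j) *: br (swapf f i j))) /\
  (* (ii) n-Hom-Lie color identity; x_1..x_{n-1} are x 0 .. x (n-2)
     (the last entry of x is unused) *)
  (forall (x y : 'I_n -> V) (dx dy : 'I_n -> Gam),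
      (forall k : 'I_n, (k < n.-1)%N -> G (dx k) (x k)) ->
      (forall k : 'I_n, G (dy k) (y k)) ->
      br (fun j : 'I_n => if (j < n.-1)%N then alpha (x j) else br y) =
      \sum_(i < n)
         eps (\sum_(k < n | (k < n.-1)%N) dx k) (\sum_(k < n | (k < i)%N) dy k) *:
         br (fun j : 'I_n => if j == i
                             then br (fun l : 'I_n => if (l < n.-1)%N then x l else y i)
                             else alpha (y j))).

Definition graded_subalgebra n (G : Gam -> V -> Prop) (br : ('I_n -> V) -> V)
    (alpha : V -> V) (h : V -> Prop) : Prop :=
  subspace h /\
  (forall x, h x -> exists (s : seq Gam) (c : Gam -> V),
      uniq s /\ (forall g, G g (c g) /\ h (c g)) /\ x = \sum_(g <- s) c g) /\
  (forall x, h x -> h (alpha x)) /\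
  (forall f : 'I_n -> V, (forall j, h (f j)) -> h (br f)).

Definition almost_product (G : Gam -> V -> Prop) (P : V -> V) : Prop :=
  deg0 G P /\ ~ (forall x, P x = x) /\ ~ (forall x, P x = - x) /\
  (forall x, P (P x) = x).

Definition centroid n (G : Gam -> V -> Prop) (br : ('I_n -> V) -> V)
    (alpha : V -> V) (T : V -> V) : Prop :=
  deg0 G T /\ (forall x, T (alpha x) = alpha (T x)) /\
  (forall (f : 'I_n -> V) (i0 : 'I_n), nat_of_ord i0 = 0%N ->
      T (br f) = br (upd f i0 (T (f i0)))).

Definition strict_product n G br alpha (P : V -> V) : Prop :=
  almost_product G P /\ @centroid n G br alpha P.

End Defs.

(* For a strict product structure P, the bracket commutes with P in every slot:
   the centroid axiom gives slot 0, and color skew-symmetry moves P one slot to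
   the right at a time.  Hence the eigenspaces g+ and g- of P for 1 and -1 are
   graded subalgebras, and a bracket with first argument in g+ and last argument
   in g- is equal both to its image under P and to the opposite of it, so it
   vanishes.  Conversely, given g = g+ (+) g-, let P be 1 on g+ and -1 on g-.
   A bracket whose arguments all lie in g+ or in g- but not all in the same one
   vanishes, because skew-symmetry sorts its arguments so that those in g+ come
   first, up to a nonzero scalar; so P commutes with the bracket.  In both
   directions the computations are done on homogeneous arguments and extended to
   all arguments by multilinearity. *)

From HB Require Import structures.
From mathcomp Require Import all_boot all_order all_algebra.
From Stdlib Require Import Classical ClassicalEpsilon FunctionalExtensionality.
Import GRing.Theory.
Local Open Scope ring_scope.
Set Implicit Arguments. Unset Strict Implicit.

Section LinearAlgebra.
Variables (K : fieldType) (V : lmodType K).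
Implicit Types (f : V -> V) (S : V -> Prop) (x y : V).

Lemma klinear0 f : klinear f -> f 0 = 0.
Proof.
move=> lin_f; have := lin_f 1 0 0; rewrite !scale1r addr0 => /esym e.
by apply: (@addrI _ (f 0)); rewrite addr0.
Qed.

Lemma klinearD f x y : klinear f -> f (x + y) = f x + f y.
Proof. by move=> lin_f; rewrite -{1}[x]scale1r lin_f scale1r. Qed.

Lemma klinearZ f (k : K) x : klinear f -> f (k *: x) = k *: f x.
Proof. by move=> lin_f; rewrite -[k *: x]addr0 lin_f klinear0 // addr0. Qed.

Lemma klinearN f x : klinear f -> f (- x) = - f x.
Proof. by move=> lin_f; rewrite -scaleN1r klinearZ // scaleN1r. Qed.

Lemma klinear_sum f (I : Type) (s : seq I) (c : I -> V) :
  klinear f -> f (\sum_(i <- s) c i) = \sum_(i <- s) f (c i).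
Proof.
move=> lin_f; elim: s => [|i s IHs]; first by rewrite !big_nil klinear0.
by rewrite !big_cons klinearD // IHs.
Qed.

Lemma klinear_comp f g : klinear f -> klinear g -> klinear (fun x => f (g x)).
Proof. by move=> lin_f lin_g k x y; rewrite lin_g lin_f. Qed.

Lemma klinear_sub f g : klinear f -> klinear g -> klinear (fun x => f x - g x).
Proof. by move=> lin_f lin_g k x y; rewrite lin_f lin_g scalerBr opprD addrACA. Qed.

Lemma subspace0 S : subspace S -> S 0.
Proof. by case. Qed.

Lemma subspaceD S x y : subspace S -> S x -> S y -> S (x + y).
Proof. by case=> _ [S_add _]; apply: S_add. Qed.

Lemma subspaceZ S (k : K) x : subspace S -> S x -> S (k *: x).
Proof. by case=> _ [_ S_scale]; apply: S_scale. Qed.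

Lemma subspaceN S x : subspace S -> S x -> S (- x).
Proof. by move=> sS Sx; rewrite -scaleN1r; apply: subspaceZ. Qed.

Lemma subspaceB S x y : subspace S -> S x -> S y -> S (x - y).
Proof. by move=> sS Sx Sy; apply: subspaceD (subspaceN _ _). Qed.

Lemma eq_oppr_eq0 x : 2 \notin [pchar K] -> x = - x -> x = 0.
Proof.
rewrite inE /= => two_neq0 /eqP.
by rewrite -subr_eq0 opprK -mulr2n -scaler_nat scaler_eq0 (negbTE two_neq0) => /eqP.
Qed.

Lemma big_uniq_widen (I : eqType) (s u : seq I) (c : I -> V) :
  uniq s -> uniq u -> {subset s <= u} ->
  \sum_(i <- s) c i = \sum_(i <- u) (if i \in s then c i else 0).
Proof.
move=> uniq_s uniq_u sub_su; rewrite -big_mkcond -big_filter; apply: perm_big.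
apply: uniq_perm; first by [].
- by rewrite filter_uniq.
- by move=> i; rewrite mem_filter andb_idr //; apply: sub_su.
Qed.

Definition is_sum_of (B : V -> Prop) x :=
  exists2 l : seq V, (forall v, v \in l -> B v) & x = \sum_(v <- l) v.

Section Slots.
Variable n : nat.
Implicit Types (F : 'I_n -> V) (i j k : 'I_n).

Lemma upd_eq F i v : upd F i v i = v.
Proof. by rewrite /upd eqxx. Qed.

Lemma upd_neq F i j v : j != i -> upd F i v j = F j.
Proof. by rewrite /upd => /negbTE ->. Qed.

Lemma upd_id F i : upd F i (F i) = F.
Proof. by apply: functional_extensionality => j; rewrite /upd; case: eqP => // ->. Qed.

Lemma upd_upd F i v w : upd (upd F i v) i w = upd F i w.
Proof. by apply: functional_extensionality => j; rewrite /upd; case: eqP. Qed.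

Lemma upd_updC F i k v w : i != k -> upd (upd F i v) k w = upd (upd F k w) i v.
Proof.
move=> ik; apply: functional_extensionality => j; rewrite /upd.
by case: eqP => // ->; rewrite eq_sym (negbTE ik).
Qed.

Definition multilinear (Phi : ('I_n -> V) -> V) :=
  forall F i, klinear (fun v => Phi (upd F i v)).

Lemma multilinear_eq0 (Phi : ('I_n -> V) -> V) (A B : 'I_n -> V -> Prop) :
  multilinear Phi -> (forall j x, A j x -> is_sum_of (B j) x) ->
  (forall F, (forall j, B j (F j)) -> Phi F = 0) ->
  forall F, (forall j, A j (F j)) -> Phi F = 0.
Proof.
move=> lin_Phi A_sum Phi_B.
suff Phi_AB m F : (forall j, (j < m)%N -> A j (F j)) ->
    (forall j, (m <= j)%N -> B j (F j)) -> Phi F = 0.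
  by move=> F FA; apply: (Phi_AB n) => // j; rewrite leqNgt ltn_ord.
elim: m F => [|m IHm] F FA FB; first by apply: Phi_B => j; apply: FB.
have [lt_mn | le_nm] := ltnP m n; last first.
  apply: IHm => j j_lt; first by apply: FA; apply: leqW.
  by rewrite leqNgt (leq_trans (ltn_ord j) le_nm) in j_lt.
pose o := Ordinal lt_mn; have [l lB Fo] := A_sum o _ (FA o (ltnSn m)).
rewrite -(upd_id F o) Fo (klinear_sum _ (fun v => v) (lin_Phi F o)).
apply: big1_seq => v /andP[_ l_v]; apply: IHm => j j_lt.
  rewrite upd_neq; first by apply/FA/ltnW.
  by apply: contraTneq j_lt => ->; rewrite ltnn.
have [-> | j_neq] := eqVneq j o; first by rewrite upd_eq; apply: lB.
rewrite upd_neq //; apply: FB; rewrite ltn_neqAle j_lt andbT.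
by apply: contra j_neq => /eqP e; apply/eqP/val_inj.
Qed.

Lemma multilinearZ (Phi : ('I_n -> V) -> V) F i (k : K) v :
  multilinear Phi -> Phi (upd F i (k *: v)) = k *: Phi (upd F i v).
Proof. by move=> lin_Phi; exact: klinearZ (lin_Phi F i). Qed.

Lemma multilinearN (Phi : ('I_n -> V) -> V) F i v :
  multilinear Phi -> Phi (upd F i (- v)) = - Phi (upd F i v).
Proof. by move=> lin_Phi; exact: klinearN (lin_Phi F i). Qed.

End Slots.

Definition eigenset (P : V -> V) (k : K) : V -> Prop := fun x => P x = k *: x.

Section Reflection.
Variables gp gm : V -> Prop.
Hypotheses (gp_subspace : subspace gp) (gm_subspace : subspace gm).
Hypothesis decomp : forall x, exists a b, gp a /\ gm b /\ x = a + b.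
Hypothesis disjoint : forall x, gp x -> gm x -> x = 0.

Lemma decomp_proj x : exists a, gp a /\ gm (x - a).
Proof. by have [a [b [gp_a [gm_b ->]]]] := decomp x; exists a; rewrite [a + b]addrC addrK. Qed.

Definition projection x := proj1_sig (constructive_indefinite_description _ (decomp_proj x)).

Definition reflection x := projection x - (x - projection x).

Lemma reflection_sum a b : gp a -> gm b -> reflection (a + b) = a - b.
Proof.
move=> gp_a gm_b; rewrite /reflection /projection.
case: constructive_indefinite_description => p [gp_p gm_p] /=.
suff -> : p = a by rewrite [a + b]addrC addrK.
apply/eqP; rewrite -subr_eq0; apply/eqP/disjoint; first exact: subspaceB.
have -> : p - a = - ((a + b - p) - b) by rewrite addrAC addrK opprB.
by apply: subspaceN => //; apply: subspaceB.
Qed.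

Lemma reflection_gp a : gp a -> reflection a = a.
Proof. by move=> gp_a; rewrite -{1}[a]addr0 reflection_sum ?subr0 //; apply: subspace0. Qed.

Lemma reflection_gm b : gm b -> reflection b = - b.
Proof. by move=> gm_b; rewrite -[b]add0r reflection_sum ?add0r //; apply: subspace0. Qed.

Lemma reflection_linear : klinear reflection.
Proof.
move=> k x y; have [a [b [gp_a [gm_b ->]]]] := decomp x.
have [c [d [gp_c [gm_d ->]]]] := decomp y.
have -> : k *: (a + b) + (c + d) = (k *: a + c) + (k *: b + d) by rewrite scalerDr addrACA.
have gp_kac : gp (k *: a + c) by apply: subspaceD => //; apply: subspaceZ.
have gm_kbd : gm (k *: b + d) by apply: subspaceD => //; apply: subspaceZ.
by rewrite !reflection_sum // scalerBr opprD addrACA.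
Qed.

Lemma reflection_involutive x : reflection (reflection x) = x.
Proof.
have [a [b [gp_a [gm_b ->]]]] := decomp x.
by rewrite reflection_sum // reflection_sum ?opprK //; apply: subspaceN.
Qed.

End Reflection.
End LinearAlgebra.

Section Grading.
Variables (K : fieldType) (Gam : zmodType) (V : lmodType K) (G : Gam -> V -> Prop).
Hypothesis gradG : grading G.

Lemma grading_subspace g : subspace (G g).
Proof. by case: gradG. Qed.

Lemma grading_span x : is_sum_of (fun v => exists g, G g v) x.
Proof.
have [_ [decomp _]] := gradG; have [s [c [_ [Gc ->]]]] := decomp x.
by exists (map c s) => [v /mapP[g _ ->]|]; [exists g | rewrite big_map].
Qed.

Lemma grading_sum_homog (u : seq Gam) (w : Gam -> V) g :
  uniq u -> g \in u -> (forall h, G h (w h)) -> G g (\sum_(h <- u) w h) ->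
  \sum_(h <- u) w h = w g.
Proof.
move=> uniq_u u_g Gw Gsum; have [_ [_ indep]] := gradG.
pose w' h := w h - (if h == g then \sum_(h <- u) w h else 0).
suff /eqP : w' g = 0 by rewrite /w' eqxx subr_eq0 => /eqP.
apply: (indep u w') => // [h|].
  rewrite /w'; case: eqP => [->|_]; last by rewrite subr0.
  exact: subspaceB (grading_subspace g) (Gw g) Gsum.
by rewrite sumrB -big_mkcond -big_filter filter_pred1_uniq // big_seq1 subrr.
Qed.

Lemma deg0_eigen_components (P : V -> V) (k : K) x : deg0 G P -> P x = k *: x ->
  exists (s : seq Gam) (c : Gam -> V), uniq s /\
    (forall g, G g (c g) /\ P (c g) = k *: c g) /\ x = \sum_(g <- s) c g.
Proof.
move=> [lin_P deg_P] Px; have [_ [decomp indep]] := gradG.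
have [s [c [uniq_s [Gc x_sum]]]] := decomp x.
have eigen_c g : g \in s -> P (c g) - k *: c g = 0.
  apply: (indep s (fun g => P (c g) - k *: c g)) => // [h|].
    have sGh := grading_subspace h.
    exact: subspaceB sGh (deg_P _ _ (Gc h)) (subspaceZ _ sGh (Gc h)).
  by rewrite sumrB -klinear_sum // -scaler_sumr -x_sum Px subrr.
exists s, (fun g => if g \in s then c g else 0); split => //; split.
  move=> g; case: ifP => s_g.
    by split; [exact: Gc | apply/eqP; rewrite -subr_eq0 eigen_c].
  by rewrite klinear0 // scaler0; split => //; apply: subspace0 (grading_subspace g).
by rewrite x_sum; apply: eq_big_seq => g ->.
Qed.

Section GradedSubalgebra.
Variables (n : nat) (br : ('I_n -> V) -> V) (alpha : V -> V) (h : V -> Prop).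
Hypothesis h_sub : graded_subalgebra G br alpha h.

Lemma graded_subalgebra_sum_of x : h x -> is_sum_of (fun v => h v /\ exists g, G g v) x.
Proof.
case: h_sub => _ [decomp _] h_x; have [s [c [_ [Gc ->]]]] := decomp x h_x.
exists (map c s) => [v /mapP[g _ ->]|]; last by rewrite big_map.
by have [Gcg hcg] := Gc g; split; last exists g.
Qed.

Lemma graded_subalgebra_components x : h x ->
  exists c : Gam -> V, (forall g, G g (c g) /\ h (c g)) /\
    exists s : seq Gam, forall u, uniq u -> {subset s <= u} -> x = \sum_(g <- u) c g.
Proof.
case: h_sub => h_subspace [decomp _] h_x; have [s [c [uniq_s [Gc ->]]]] := decomp x h_x.
exists (fun g => if g \in s then c g else 0); split.
  move=> g; case: ifP => _; first exact: Gc.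
  by split; apply: subspace0; first exact: grading_subspace.
by exists s => u uniq_u sub_su; apply: big_uniq_widen.
Qed.

End GradedSubalgebra.
End Grading.

Definition swap_at (T : Type) n (s : 'I_n -> T) (i j : 'I_n) : 'I_n -> T :=
  fun k => if k == i then s j else if k == j then s i else s k.

Section Patterns.
Variables (n : nat) (s : 'I_n -> bool).

Lemma swap_weight (i j : 'I_n) : j = i.+1 :> nat -> ~~ s i -> s j ->
  (\sum_(k < n) swap_at s i j k * k).+1%N = (\sum_(k < n) s k * k)%N.
Proof.
move=> ji si sj; have ij : (j == i) = false by rewrite -val_eqE /= ji eqn_leq ltnn.
rewrite (bigD1 i) // (bigD1 j) /= ?ij // [in RHS](bigD1 i) // [in RHS](bigD1 j) /= ?ij //.
rewrite /swap_at eqxx ij eqxx (negbTE si) sj ji !mul0n !mul1n !add0n addSn.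
by congr (_ + _).+1; apply: eq_bigr => k /andP[/negbTE -> /negbTE ->].
Qed.

Lemma adjacent_antitone : (forall i j : 'I_n, j = i.+1 :> nat -> s j -> s i) ->
  forall i j : 'I_n, (i <= j)%N -> s j -> s i.
Proof.
move=> adj i [j lt_jn]; elim: j lt_jn => [|j IHj] lt_jn /= le_ij sj.
  by have -> : i = Ordinal lt_jn by apply: val_inj; apply/eqP; rewrite -leqn0.
rewrite leq_eqVlt ltnS in le_ij; case/orP: le_ij => [/eqP ij | le_ij].
  by have -> : i = Ordinal lt_jn by apply: val_inj.
by apply: (IHj (ltnW lt_jn)) => //; apply: (adj _ (Ordinal lt_jn)).
Qed.

Lemma antitone_threshold : (forall i j : 'I_n, (i <= j)%N -> s j -> s i) ->
  (exists j, ~~ s j) -> (exists j, s j) ->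
  exists2 m : nat, (1 <= m <= n.-1)%N & forall j : 'I_n, s j = (j < m)%N.
Proof.
move=> anti [j0 sj0] [k0 sk0].
case: (@arg_minnP _ j0 (fun j => ~~ s j) (fun j : 'I_n => nat_of_ord j) sj0).
move=> m sm min_m.
exists m.
  apply/andP; split.
    by rewrite lt0n; apply: contraNneq sm => m0; apply: (anti m k0); rewrite ?m0.
  by rewrite -ltnS prednK ?ltn_ord //; apply: leq_ltn_trans (ltn_ord m).
move=> j; case: ltnP => [lt_jm | le_mj].
  by apply/negPn/negP => /min_m; rewrite leqNgt lt_jm.
by apply/negbTE; apply: contra sm; apply: anti.
Qed.

End Patterns.

Section HomLieColor.
Variables (K : fieldType) (Gam : zmodType) (V : lmodType K) (n : nat).
Variables (G : Gam -> V -> Prop) (br : ('I_n -> V) -> V).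
Variables (eps : Gam -> Gam -> K) (alpha : V -> V).
Hypothesis HL : nHomLieColor G br eps alpha.

Let gradG : grading G. Proof. by case: HL. Qed.

Lemma bracket_multilinear : multilinear br.
Proof. by case: HL => _ [_ [_ []]]. Qed.

Lemma bracket_skew (f : 'I_n -> V) (d : 'I_n -> Gam) (i j : 'I_n) :
  (forall k, G (d k) (f k)) -> j = i.+1 :> nat ->
  br f = - (eps (d i) (d j) *: br (swapf f i j)).
Proof. by case: HL => _ [_ [_ [_ [_ [skew _]]]]]; apply: skew. Qed.

Lemma swap_homog (f : 'I_n -> V) (d : 'I_n -> Gam) (i j : 'I_n) :
  (forall k, G (d k) (f k)) -> forall k, G (swap_at d i j k) (swapf f i j k).
Proof. by move=> Gf k; rewrite /swap_at /swapf; case: ifP => _; [|case: ifP => _]. Qed.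

Lemma homog_degrees (f : 'I_n -> V) : (forall j, exists g, G g (f j)) ->
  exists d : 'I_n -> Gam, forall j, G (d j) (f j).
Proof.
move=> homf; exists (fun j => proj1_sig (constructive_indefinite_description _ (homf j))).
by move=> j; case: constructive_indefinite_description.
Qed.

Lemma alpha_linear : klinear alpha.
Proof. by case: HL => _ [_ [[]]]. Qed.

Section SlotCommute.
Variables (P : V -> V) (k : 'I_n).
Hypothesis lin_P : klinear P.

Lemma slot_multilinear : multilinear (fun f => br (upd f k (P (f k)))).
Proof.
move=> f i a x y /=; have [-> | ik] := eqVneq i k.
  by rewrite !upd_eq !upd_upd lin_P bracket_multilinear.
rewrite !upd_neq 1?eq_sym // !(upd_updC _ _ _ ik).
exact: bracket_multilinear.
Qed.

Lemma slot_commute_span (B : V -> Prop) : (forall x, is_sum_of B x) ->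
  (forall f, (forall j, B (f j)) -> P (br f) = br (upd f k (P (f k)))) ->
  forall f, P (br f) = br (upd f k (P (f k))).
Proof.
move=> B_span P_B f; apply/eqP; rewrite -subr_eq0; apply/eqP.
pose Phi g := P (br g) - br (upd g k (P (g k))).
apply: (multilinear_eq0 (Phi := Phi) (A := fun _ _ => True) (B := fun _ => B)) => //.
- move=> g i; apply: klinear_sub; last exact: slot_multilinear.
  exact: klinear_comp lin_P (bracket_multilinear g i).
- by move=> g Bg; apply/eqP; rewrite subr_eq0 P_B.
Qed.

End SlotCommute.

Section Centroid.
Variable P : V -> V.
Hypothesis P_centroid : centroid G br alpha P.

Let lin_P : klinear P. Proof. by case: P_centroid => [[]]. Qed.

Lemma centroid_slot_homog (f : 'I_n -> V) (d : 'I_n -> Gam) (k : 'I_n) :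
  (forall j, G (d j) (f j)) -> P (br f) = br (upd f k (P (f k))).
Proof.
case: P_centroid => [[_ deg_P] [_ P_br0]]; case: k => k.
elim: k f d => [|k IHk] f d lt_kn Gf; first exact: P_br0.
set i := Ordinal (ltnW lt_kn); set j := Ordinal lt_kn.
have ji : j = i.+1 :> nat by [].
have ij : (i == j) = false by apply/negbTE; rewrite -val_eqE /= neq_ltn ltnSn.
rewrite (bracket_skew Gf ji) klinearN // klinearZ //.
rewrite (IHk _ _ (ltnW lt_kn) (swap_homog i j Gf)) -/i.
have Gf' m : G (d m) (upd f j (P (f j)) m).
  by rewrite /upd; case: eqP => [->|_]; [apply: deg_P|].
rewrite [RHS](bracket_skew Gf' ji) /swapf /upd eqxx ij.
congr (- (_ *: br _)); apply: functional_extensionality => m.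
by rewrite eqxx; case: (m == i) => //; case: (m == j).
Qed.

Lemma centroid_slot (f : 'I_n -> V) (k : 'I_n) : P (br f) = br (upd f k (P (f k))).
Proof.
apply: (slot_commute_span lin_P (B := fun v => exists g, G g v)) => [x | g homg].
  exact: grading_span.
by have [d Gd] := homog_degrees homg; apply: centroid_slot_homog Gd.
Qed.

Lemma eigenset_graded_subalgebra (c : K) : (0 < n)%N ->
  graded_subalgebra G br alpha (eigenset P c).
Proof.
move=> n_gt0; have [[_ deg_P] [P_alpha _]] := P_centroid.
split; [|split; [|split]]; rewrite /eigenset.
- split; first by rewrite klinear0 // scaler0.
  split=> [x y Px Py | a x Px]; first by rewrite klinearD // Px Py scalerDr.
  by rewrite klinearZ // Px !scalerA mulrC.
- by move=> x Px; apply: deg0_eigen_components.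
- by move=> x Px; rewrite P_alpha Px klinearZ //; exact: alpha_linear.
- move=> f Pf; rewrite (centroid_slot f (Ordinal n_gt0)) Pf.
  by rewrite multilinearZ ?upd_id //; exact: bracket_multilinear.
Qed.

Lemma centroid_mixed_eigen_eq0 (i : nat) (f : 'I_n -> V) :
  2 \notin [pchar K] -> (1 <= i <= n.-1)%N ->
  (forall j : 'I_n, (j < i)%N -> eigenset P 1 (f j)) ->
  (forall j : 'I_n, (i <= j)%N -> eigenset P (-1) (f j)) -> br f = 0.
Proof.
move=> two /andP[i_gt0 le_in] fp fm.
have n_gt0 : (0 < n)%N by move: (leq_trans i_gt0 le_in); case: n.
have lt_last : (n.-1 < n)%N by rewrite prednK.
have P_first : P (br f) = br f.
  by rewrite (centroid_slot f (Ordinal n_gt0)) fp // scale1r upd_id.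
have P_last : P (br f) = - br f.
  rewrite (centroid_slot f (Ordinal lt_last)) fm // scaleN1r.
  by rewrite multilinearN ?upd_id //; exact: bracket_multilinear.
by apply: eq_oppr_eq0 two _; rewrite -{1}P_first P_last.
Qed.

End Centroid.

Section MixedBrackets.
Variables gp gm : V -> Prop.
Hypotheses (gp_sub : graded_subalgebra G br alpha gp) (gm_sub : graded_subalgebra G br alpha gm).
Hypothesis sorted_eq0 : forall i : nat, (1 <= i <= n.-1)%N -> forall f : 'I_n -> V,
  (forall j : 'I_n, (j < i)%N -> gp (f j)) ->
  (forall j : 'I_n, (i <= j)%N -> gm (f j)) -> br f = 0.

(* Bubble sort: an adjacent transposition only rescales the bracket, and
   each one moving a [gp] entry left lowers the sum of the [gp] positions. *)
Lemma mixed_bracket_homog_eq0 (s : 'I_n -> bool) (f : 'I_n -> V) (d : 'I_n -> Gam) :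
  (forall j, G (d j) (f j)) -> (forall j, if s j then gp (f j) else gm (f j)) ->
  (exists j, ~~ s j) -> (exists j, s j) -> br f = 0.
Proof.
have [N] := ubnP (\sum_(k < n) s k * k)%N.
elim: N s f d => // N IHN s f d lt_sN Gf sf not_s some_s.
case: (pickP (fun ij : 'I_n * 'I_n => [&& ij.2 == ij.1.+1 :> nat, ~~ s ij.1 & s ij.2])).
  case=> i j /and3P[/eqP ji si sj].
  have ij : (j == i) = false by rewrite -val_eqE /= ji eqn_leq ltnn.
  rewrite (bracket_skew Gf ji).
  suff -> : br (swapf f i j) = 0 by rewrite scaler0 oppr0.
  apply: (IHN (swap_at s i j) _ (swap_at d i j)).
  - by rewrite -ltnS swap_weight.
  - exact: swap_homog.
  - move=> m; rewrite /swap_at /swapf.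
    by case: (m == i); last case: (m == j); apply: sf.
  - by exists j; rewrite /swap_at ij eqxx.
  - by exists i; rewrite /swap_at eqxx.
move=> no_inversion.
have adj (i j : 'I_n) : j = i.+1 :> nat -> s j -> s i.
  move=> ji sj; apply/negPn/negP => si.
  by have := no_inversion (i, j); rewrite /= ji eqxx si sj.
have [m m_range sE] := antitone_threshold (adjacent_antitone adj) not_s some_s.
apply: (sorted_eq0 m_range) => j j_m; have := sf j; rewrite sE.
  by rewrite j_m.
by rewrite ltnNge j_m.
Qed.

Lemma mixed_bracket_eq0 (s : 'I_n -> bool) (f : 'I_n -> V) :
  (forall j, if s j then gp (f j) else gm (f j)) ->
  (exists j, ~~ s j) -> (exists j, s j) -> br f = 0.
Proof.
move=> sf not_s some_s; pose A j x := if s j then gp x else gm x.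
apply: (multilinear_eq0 (A := A) (B := fun j x => A j x /\ exists g, G g x)) sf.
- exact: bracket_multilinear.
- move=> j x; rewrite /A; case: (s j).
    exact: graded_subalgebra_sum_of gp_sub x.
  exact: graded_subalgebra_sum_of gm_sub x.
- move=> g Bg; have [d Gd] := homog_degrees (fun j => (Bg j).2).
  by apply: (mixed_bracket_homog_eq0 Gd) not_s some_s => j; have [] := Bg j.
Qed.

Lemma membership_pattern (f : 'I_n -> V) : (forall j, gp (f j) \/ gm (f j)) ->
  exists s : 'I_n -> bool, forall j, if s j then gp (f j) else gm (f j).
Proof.
move=> f_pm; exists (fun j => if excluded_middle_informative (gp (f j)) then true else false).
by move=> j; case: excluded_middle_informative => // not_gp; case: (f_pm j).
Qed.

Section ProductStructure.
Hypothesis decomp : forall x, exists a b, gp a /\ gm b /\ x = a + b.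
Hypothesis disjoint : forall x, gp x -> gm x -> x = 0.

Let gp_subspace : subspace gp. Proof. by case: gp_sub. Qed.
Let gm_subspace : subspace gm. Proof. by case: gm_sub. Qed.

Lemma reflection_deg0 : deg0 G (reflection decomp).
Proof.
split; first exact: reflection_linear.
move=> g x Gx; have [a [b [gp_a [gm_b x_ab]]]] := decomp x.
have [c [Gc [s a_sum]]] := graded_subalgebra_components gradG gp_sub gp_a.
have [e [Ge [t b_sum]]] := graded_subalgebra_components gradG gm_sub gm_b.
pose u := undup (g :: s ++ t); have uniq_u : uniq u := undup_uniq _.
have s_u : {subset s <= u} by move=> h s_h; rewrite mem_undup inE mem_cat s_h orbT.
have t_u : {subset t <= u} by move=> h t_h; rewrite mem_undup inE mem_cat t_h !orbT.
have x_u : x = \sum_(h <- u) (c h + e h) by rewrite big_split -a_sum // -b_sum.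
have Gce h : G h (c h + e h).
  by apply: subspaceD; [exact: grading_subspace | exact: (Gc h).1 | exact: (Ge h).1].
(* [x] is homogeneous of degree [g], so only the [g]-components of [a] and [b] survive. *)
have x_g : x = c g + e g.
  rewrite {1}x_u (@grading_sum_homog _ _ _ _ gradG _ _ g) // ?mem_undup ?mem_head //.
  by rewrite -x_u.
rewrite x_g reflection_sum //; [|exact: (Gc g).2|exact: (Ge g).2].
by apply: subspaceB; [exact: grading_subspace | exact: (Gc g).1 | exact: (Ge g).1].
Qed.

Lemma reflection_alpha x : reflection decomp (alpha x) = alpha (reflection decomp x).
Proof.
have [a [b [gp_a [gm_b ->]]]] := decomp x.
have [_ [_ [alpha_gp _]]] := gp_sub; have [_ [_ [alpha_gm _]]] := gm_sub.
have lin_alpha := alpha_linear.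
rewrite (klinearD (f := alpha)) // reflection_sum //; [|exact: alpha_gp|exact: alpha_gm].
by rewrite reflection_sum // (klinearD (f := alpha)) // (klinearN (f := alpha)).
Qed.

Lemma reflection_slot (k : 'I_n) (f : 'I_n -> V) :
  reflection decomp (br f) = br (upd f k (reflection decomp (f k))).
Proof.
have lin_R : klinear (reflection decomp) by apply: reflection_linear.
apply: (slot_commute_span lin_R (B := fun v => gp v \/ gm v)).
  move=> x; have [a [b [gp_a [gm_b ->]]]] := decomp x.
  exists [:: a; b]; last by rewrite big_cons big_seq1.
  by move=> v; rewrite !inE => /orP[] /eqP ->; [left | right].
move=> {}f f_pm; have [s sf] := membership_pattern f_pm.
have sRf j : if s j then gp (upd f k (reflection decomp (f k)) j)
             else gm (upd f k (reflection decomp (f k)) j).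
  rewrite /upd; case: eqP => [->|_]; last exact: sf.
  have := sf k; case: (s k) => [gp_fk | gm_fk]; first by rewrite reflection_gp.
  by rewrite reflection_gm //; apply: subspaceN.
have gp_br : (forall j, gp (f j)) -> gp (br f) by case: gp_sub => _ [_ [_]]; apply.
have gm_br : (forall j, gm (f j)) -> gm (br f) by case: gm_sub => _ [_ [_]]; apply.
case: (pickP (fun j => ~~ s j)) => [j0 sj0 | all_s]; last first.
  have gp_f j : gp (f j) by have := sf j; have := all_s j; case: (s j).
  by rewrite !reflection_gp ?upd_id //; apply: gp_br.
case: (pickP s) => [k0 sk0 | no_s]; last first.
  have gm_f j : gm (f j) by have := sf j; rewrite no_s.
  rewrite !reflection_gm ?multilinearN ?upd_id //; [exact: bracket_multilinear | exact: gm_br].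
rewrite (mixed_bracket_eq0 sf) ?(mixed_bracket_eq0 sRf) ?klinear0 //; by [exists j0 | exists k0].
Qed.

Lemma reflection_strict_product : 2 \notin [pchar K] ->
  (exists x, gp x /\ x != 0) -> (exists x, gm x /\ x != 0) ->
  strict_product G br alpha (reflection decomp).
Proof.
move=> two [x [gp_x x_neq0]] [y [gm_y y_neq0]].
split; split; try exact: reflection_deg0.
- split; [move=> R_id | split; [move=> R_opp | exact: reflection_involutive]].
    apply/(negP y_neq0)/eqP/(eq_oppr_eq0 two).
    by rewrite -{1}(R_id y) reflection_gm.
  apply/(negP x_neq0)/eqP/(eq_oppr_eq0 two).
  by rewrite -(R_opp x) reflection_gp.
- by split; [exact: reflection_alpha | move=> f i0 _; exact: reflection_slot].
Qed.

End ProductStructure.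
End MixedBrackets.

Definition product_decomposition (gp gm : V -> Prop) : Prop :=
  graded_subalgebra G br alpha gp /\ graded_subalgebra G br alpha gm /\
  (exists x, gp x /\ x != 0) /\ (exists x, gm x /\ x != 0) /\
  (forall x, exists a b, gp a /\ gm b /\ x = a + b) /\
  (forall x, gp x -> gm x -> x = 0) /\
  (forall i : nat, (1 <= i <= n.-1)%N ->
     forall f : 'I_n -> V,
       (forall j : 'I_n, (j < i)%N -> gp (f j)) ->
       (forall j : 'I_n, (i <= j)%N -> gm (f j)) ->
       br f = 0).

Lemma strict_product_decomposition (P : V -> V) : 2 \notin [pchar K] -> (0 < n)%N ->
  strict_product G br alpha P -> product_decomposition (eigenset P 1) (eigenset P (-1)).
Proof.
move=> two n_gt0 [[[lin_P _] [not_id [not_opp P_inv]]] P_centroid].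
have two_neq0 : (2%:R : K) != 0 by move: two; rewrite inE.
do 2 (split; first exact: eigenset_graded_subalgebra).
split.
  have [x Px] := not_all_ex_not _ _ not_opp; exists (x + P x).
  split; first by rewrite /eigenset klinearD // P_inv scale1r addrC.
  by apply/eqP => sum0; apply: Px; apply/eqP; rewrite -addr_eq0 addrC sum0.
split.
  have [x Px] := not_all_ex_not _ _ not_id; exists (x - P x).
  split; first by rewrite /eigenset klinearD // klinearN // P_inv scaleN1r opprB.
  by apply/eqP => diff0; apply: Px; apply/eqP; rewrite eq_sym -subr_eq0 diff0.
split.
  move=> x; exists (2%:R^-1 *: (x + P x)), (2%:R^-1 *: (x - P x)); rewrite /eigenset.
  split; first by rewrite (klinearZ (f := P)) // klinearD // P_inv scale1r addrC.
  split.
    rewrite (klinearZ (f := P)) // klinearD // klinearN // P_inv.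
    by rewrite scalerA mulrC -scalerA scaleN1r opprB.
  by rewrite -scalerDr addrACA subrr addr0 -mulr2n -scaler_nat scalerA mulVf // scale1r.
split; last by move=> i i_range f; apply: centroid_mixed_eigen_eq0.
by move=> x Px1 Pxm; apply: eq_oppr_eq0 two _; rewrite -scaleN1r -Pxm Px1 scale1r.
Qed.

Lemma product_decomposition_strict (gp gm : V -> Prop) : 2 \notin [pchar K] ->
  product_decomposition gp gm -> exists P, strict_product G br alpha P.
Proof.
move=> two [gp_sub [gm_sub [gp_nz [gm_nz [decomp [disjoint sorted_eq0]]]]]].
eexists; apply: (reflection_strict_product gp_sub gm_sub sorted_eq0 decomp disjoint) => //.
Qed.

End HomLieColor.

Theorem proposition6p11 (K : fieldType) (charK : [pchar K] =i pred0)
  (Gam : zmodType) (V : lmodType K) (n : nat) (hn : (2 <= n)%N)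
  (G : Gam -> V -> Prop) (br : ('I_n -> V) -> V)
  (eps : Gam -> Gam -> K) (alpha : V -> V) :
  nHomLieColor G br eps alpha ->
  ((exists P : V -> V, strict_product G br alpha P) <->
   (exists gp gm : V -> Prop,
      graded_subalgebra G br alpha gp /\ graded_subalgebra G br alpha gm /\
      (exists x, gp x /\ x != 0) /\ (exists x, gm x /\ x != 0) /\
      (forall x, exists a b, gp a /\ gm b /\ x = a + b) /\
      (forall x, gp x -> gm x -> x = 0) /\
      (forall i : nat, (1 <= i <= n.-1)%N ->
         forall f : 'I_n -> V,
           (forall j : 'I_n, (j < i)%N -> gp (f j)) ->
           (forall j : 'I_n, (i <= j)%N -> gm (f j)) ->
           br f = 0))).
Proof.
move=> HL; have two : 2 \notin [pchar K] by rewrite charK.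
split=> [[P P_strict] | [gp [gm gp_gm]]].
  exists (eigenset P 1), (eigenset P (-1)).
  exact: (strict_product_decomposition HL two (ltnW hn) P_strict).
exact: (product_decomposition_strict HL two gp_gm).
Qed.
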